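(* Let $R$ be a ring with unity and involution $*$, and let $a,b,c\in R$. The following statements are equivalent. (1) $a$ is left dual $(b,c)$-core invertible. (2) $R=(cab)^*R\oplus r(b)$. (3) $R=(cab)^*R+r(b)$.
   Context: An element $a\in R$ is called left dual $(b,c)$-core invertible if there exists $x\in Rc$ such that $bxab=b$ and $(xab)^*=xab$. For $b\in R$, $r(b)=\{s\in R: bs=0\}$ is the right annihilator of $b$. *)

From HB Require Import structures.
From mathcomp Require Import all_boot all_order all_algebra.
Set Implicit Arguments. Unset Strict Implicit. Unset Printing Implicit Defensive.
Import GRing.Theory.
Local Open Scope ring_scope.

Definition involution (R : pzRingType) (star : R -> R) : Prop :=
  (forall x y, star (x + y) = star x + star y) /\
  (forall x y, star (x * y) = star y * star x) /\
  (forall x, star (star x) = x).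

Definition left_dual_bc_core_invertible (R : pzRingType) (star : R -> R)
  (a b c : R) : Prop :=
  exists x : R, (exists y : R, x = y * c) /\ b * x * a * b = b /\
    star (x * a * b) = x * a * b.

Definition rann (R : pzRingType) (b : R) : R -> Prop := fun s => b * s = 0.

Definition rideal (R : pzRingType) (u : R) : R -> Prop :=
  fun s => exists t : R, s = u * t.

Definition sum_whole (R : pzRingType) (A B : R -> Prop) : Prop :=
  forall r : R, exists s t : R, A s /\ B t /\ r = s + t.

Definition dsum_whole (R : pzRingType) (A B : R -> Prop) : Prop :=
  sum_whole A B /\ (forall z : R, A z -> B z -> z = 0).

(* If [x = y c] witnesses the core invertibility, [p := x a b] is a Hermitian
   element with [b p = b], lying in [(cab)^* R] and in [R b]; such a [p]
   projects [R] onto [(cab)^* R] along [r(b)].  Conversely, writing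
   [1 = (cab)^* t + s] with [b s = 0], the element [e := (cab)^* t] satisfies
   [b e = b] and lies in [b^* R], which forces [e^* e = e], so [e] is
   Hermitian and [x := t^* c] is a witness with [x a b = e^* = e]. *)

From mathcomp Require Import all_boot all_order all_algebra.
Local Open Scope ring_scope.
Import GRing.Theory.

Lemma dsum_rideal_rann (R : pzRingType) (u b p : R) :
  b * p = b -> p * u = u -> rideal u p -> (exists v, p = v * b) ->
  dsum_whole (rideal u) (rann b).
Proof.
move=> bp pu [w pw] [v pE]; split.
- move=> r; exists (p * r), (r - p * r); split; [|split].
  + by exists (w * r); rewrite pw mulrA.
  + by rewrite /rann mulrBr mulrA bp subrr.
  + by rewrite addrC subrK.
- move=> _ [t ->] bz.
  by rewrite -pu -mulrA pE -mulrA bz mulr0.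
Qed.

Section CoreInvertibility.

Variables (R : pzRingType) (star : R -> R).
Hypothesis star_inv : involution star.

Lemma star_mul (x y : R) : star (x * y) = star y * star x.
Proof. by case: star_inv => _ []. Qed.

Lemma starK (x : R) : star (star x) = x.
Proof. by case: star_inv => _ []. Qed.

Lemma hermitian_rfix_rideal (b e : R) :
  b * e = b -> rideal (star b) e -> star e = e.
Proof.
move=> be [w eE].
have eb : star e * star b = star b by rewrite -star_mul be.
have ee : star e * e = e by rewrite {2}eE mulrA eb -eE.
by rewrite -ee star_mul starK ee.
Qed.

Lemma core_inv_dsum (a b c : R) :
  left_dual_bc_core_invertible star a b c ->
  dsum_whole (rideal (star (c * a * b))) (rann b).
Proof.
move=> [_ [[y ->] [bxab pH]]].
set p := y * c * a * b in pH.
have bp : b * p = b by rewrite /p !mulrA in bxab *.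
have pb : p * star b = star b by rewrite -{1}pH -star_mul bp.
apply: (@dsum_rideal_rann _ _ _ p).
- exact: bp.
- by rewrite !star_mul mulrA pb.
- by exists (star y); rewrite -pH /p -!mulrA star_mul !mulrA.
- by exists (y * c * a).
Qed.

Lemma sum_core_inv (a b c : R) :
  sum_whole (rideal (star (c * a * b))) (rann b) ->
  left_dual_bc_core_invertible star a b c.
Proof.
move=> /(_ 1) [u [s [[t ->] [bs sum1]]]].
set e := star (c * a * b) * t.
have be : b * e = b by rewrite -{2}(mulr1 b) sum1 mulrDr bs addr0.
have eH : star e = e.
  apply: hermitian_rfix_rideal be _.
  by exists (star a * star c * t); rewrite /e !star_mul !mulrA.
have xab : star t * c * a * b = e by rewrite -eH /e star_mul starK !mulrA.
exists (star t * c); split; first by exists (star t).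
split; last by rewrite xab eH.
by move: be; rewrite -xab !mulrA.
Qed.

End CoreInvertibility.

Theorem theorem2p8 (R : pzRingType) (star : R -> R) (a b c : R) :
  involution star ->
  [/\ (left_dual_bc_core_invertible star a b c <->
         dsum_whole (rideal (star (c * a * b))) (rann b)),
      (dsum_whole (rideal (star (c * a * b))) (rann b) <->
         sum_whole (rideal (star (c * a * b))) (rann b)) &
      (left_dual_bc_core_invertible star a b c <->
         sum_whole (rideal (star (c * a * b))) (rann b))].
Proof.
move=> star_inv.
have to_dsum := @core_inv_dsum R star star_inv a b c.
have of_sum := @sum_core_inv R star star_inv a b c.
split; split=> H.
- exact: to_dsum.
- exact/of_sum/H.1.
- exact: H.1.
- exact/to_dsum/of_sum.
- exact: (to_dsum H).1.
- exact: of_sum.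
Qed.
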